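(* Let $f:\mathbb{R}^n\to\mathbb{R}$ be $C^2$ smooth, $\lambda>0$, $h(x)=\lambda\|x\|_1$, $t>0$, and let $x^*$ be a root of $F_{\mathrm{PGM}}(x):=x-\mathrm{prox}_{th}(x-t\nabla f(x))$. Suppose strict complementarity holds at $x^*$, i.e. there is no index $i$ with $x^*_i=0$ and $|[\nabla f(x^* )]_i|=\lambda$. Then there exists $b>0$ such that the Jacobian of $\mathrm{prox}_{th}$ exists and is constant on the set $\{x-t\nabla f(x): x\in\bar B(x^*,b)\}$.
   Context: $\mathrm{prox}_{th}(y)=\arg\min_x\{h(x)+\frac{1}{2t}\|x-y\|^2\}$ (componentwise soft thresholding at level $t\lambda$). $\bar B(x,r)$ is the closed Euclidean ball of radius $r$ centered at $x$. *)

From HB Require Import structures.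
From mathcomp Require Import all_boot all_order all_algebra.
From mathcomp Require Import all_classical all_reals all_analysis.
Set Implicit Arguments. Unset Strict Implicit. Unset Printing Implicit Defensive.
Import Order.TTheory GRing.Theory Num.Theory.
Import numFieldNormedType.Exports.
Local Open Scope classical_set_scope.
Local Open Scope ring_scope.

Definition basis_vec {R : realType} {n : nat} (i : 'I_n) : 'rV[R]_n := delta_mx 0 i.

Definition partial {R : realType} {n : nat} (i : 'I_n) (f : 'rV[R]_n -> R)
  (x : 'rV[R]_n) : R := 'D_(basis_vec i) f x.

Definition C2 {R : realType} {n : nat} (f : 'rV[R]_n -> R) : Prop :=
  continuous f /\
  (forall i x, derivable f x (basis_vec i)) /\
  (forall i, continuous (partial i f)) /\
  (forall i j x, derivable (partial i f) x (basis_vec j)) /\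
  (forall i j, continuous (partial j (partial i f))).

Definition grad {R : realType} {n : nat} (f : 'rV[R]_n -> R) (x : 'rV[R]_n)
  : 'rV[R]_n := \row_i partial i f x.

(* prox_{th} for h = lam * ||.||_1 : componentwise soft thresholding at level t*lam *)
Definition soft_thr {R : realType} (k a : R) : R :=
  if k < a then a - k else if a < - k then a + k else 0.

Definition prox_l1 {R : realType} {n : nat} (t lam : R) (y : 'rV[R]_n) : 'rV[R]_n :=
  \row_i soft_thr (t * lam) (y 0 i).

Definition cball_euclid {R : realType} {n : nat} (c : 'rV[R]_n) (r : R) : set 'rV[R]_n :=
  [set x | \sum_i (x 0 i - c 0 i) ^+ 2 <= r ^+ 2].

From HB Require Import structures.
From mathcomp Require Import all_boot all_order all_algebra.
From mathcomp Require Import all_classical all_reals all_analysis.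
From mathcomp Require Import lra.
Import Order.TTheory GRing.Theory Num.Theory.
Import numFieldNormedType.Exports.
Local Open Scope classical_set_scope.
Local Open Scope ring_scope.

(* Soft thresholding is affine, with slope 0 or 1, away from its two kinks
   +-t*lam.  Strict complementarity at the fixed point x0 says exactly that no
   coordinate of y0 = x0 - t grad f(x0) sits on a kink, so prox_l1 is affine on
   a neighbourhood U of y0, with a diagonal 0/1 linear part fixed by y0.  Being
   affine on the open set interior(U), prox_l1 is differentiable there with that
   constant Jacobian; and since x |-> x - t grad f(x) is continuous (continuity
   of the first partials suffices), it maps a small closed ball around x0 into
   interior(U). *)

Section soft_thresholding.
Context {R : realType}.
Implicit Types k a z : R.

Definition soft_thr_slope k a : R := if k < `|a| then 1 else 0.

Lemma soft_thr_dead_zone k a : `|a| <= k -> soft_thr k a = 0.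
Proof.
rewrite ler_norml => /andP[ka ak].
by rewrite /soft_thr ltNge ak /= ltNge ka.
Qed.

Lemma soft_thr_affine_near k a : 0 <= k -> `|a| != k ->
  \forall z \near a, soft_thr k z = soft_thr k a + (z - a) * soft_thr_slope k a.
Proof.
move=> k0 ak; apply/nbhs_ballP.
exists `| `|a| - k |; first by have := ak; rewrite -subr_eq0 -normr_gt0.
move=> z; rewrite -ball_normE /= /soft_thr /soft_thr_slope.
move: ak; rewrite neq_lt.
have [a0|a0] := lerP 0 a; [rewrite (ger0_norm a0)|rewrite (ltr0_norm a0)].
all: case/orP => ak;
  [rewrite [`|_ - k|]ltr0_norm ?subr_lt0 // | rewrite [`|_ - k|]gtr0_norm ?subr_gt0 //].
all: rewrite (ltr_norml (a - z)) => /andP[h1 h2].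
all: by repeat case: ltrP => ?; lra.
Qed.

Lemma soft_thr_fixpoint_off_kink (t lam x g : R) : 0 < t ->
  x = soft_thr (t * lam) (x - t * g) -> ~ (x = 0 /\ `|g| = lam) ->
  `|x - t * g| != t * lam.
Proof.
move=> t0 fx nsc; apply/eqP => kink; apply: nsc.
have x0 : x = 0 by rewrite fx soft_thr_dead_zone // kink.
split=> //; move: kink; rewrite x0 sub0r normrN normrM (gtr0_norm t0).
exact: (mulfI (lt0r_neq0 t0)).
Qed.

End soft_thresholding.

Section matrix_analysis.
Context {R : realType}.

Lemma cvg_mx_coord (T : Type) (F : set_system T) {FF : Filter F} m n
    (g : T -> 'M[R]_(m, n)) (l : 'M[R]_(m, n)) :
  (forall i j, g x i j @[x --> F] --> l i j) -> g @ F --> l.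
Proof.
move=> gl; apply/cvg_ballP => e e0.
have : \forall x \near F, forall i j, ball (l i j) e (g x i j).
  by do 2![apply: filter_forall => ?]; exact: cvg_ball.
by apply: filterS => x lgx; split.
Qed.

Lemma mulmx_continuous m n p (D : 'M[R]_(n, p)) :
  continuous (fun u : 'M[R]_(m, n) => u *m D).
Proof.
move=> u; apply: (@cvg_mx_coord _ _ (nbhs_filter u)) => i j; rewrite mxE.
under eq_cvg do rewrite mxE.
apply: cvg_big => [|k _]; first exact: add_continuous.
by apply: cvgMr_tmp; exact: coord_continuous.
Qed.

Lemma differentiable_near_affine n m (f : 'rV[R]_n -> 'rV[R]_m)
    (D : 'M[R]_(n, m)) (a y : 'rV[R]_n) :
  (\forall z \near y, f z = f a + (z - a) *m D) ->
  differentiable f y /\ 'J f y = D.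
Proof.
move=> fa.
have fy : f y = f a + (y - a) *m D := nbhs_singleton fa.
have fyh : \forall h \near (0 : 'rV[R]_n), f (h + y) = f y + h *m D.
  move: fa; rewrite (near_shift 0) subr0; apply: filterS => h.
  rewrite /= => ->.
  by rewrite fy -[h + y - a]addrA mulmxDl [h *m D + _]addrC addrA.
have dfE : f \o shift y = cst (f y) + mulmxr D +o_ (0 : 'rV[R]_n) id.
  apply/eqaddoP => e e0; move: fyh; apply: filterS => h fh /=.
  have -> : (f \o shift y - (cst (f y) + mulmxr D)) h =
            f (h + y) - (f y + h *m D) by [].
  by rewrite fh subrr normr0 mulr_ge0 // ltW.
have dfD : 'd f y = mulmxr D :> (_ -> _).
  by apply: (diff_unique _ dfE) => u; exact: mulmx_continuous.
have df : differentiable f y.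
  by apply/diff_locallyP; rewrite dfD; split=> // u; exact: mulmx_continuous.
split=> //; apply/row_matrixP => i.
by rewrite /jacobian !rowE mul_rV_lin1 dfD.
Qed.

Lemma cball_euclid_sub_ball n (c : 'rV[R]_n) (r e : R) :
  0 <= r -> r < e -> cball_euclid c r `<=` ball c e.
Proof.
move=> r0 re x cx; split=> [|i j]; first exact: le_lt_trans re.
rewrite (ord1 i) -ball_normE /=.
have : (x 0 j - c 0 j) ^+ 2 <= r ^+ 2.
  apply: le_trans cx; rewrite (bigD1 j) //= lerDl.
  by apply: sumr_ge0 => l _; exact: sqr_ge0.
by rewrite ltr_norml => ?; apply/andP; split; nra.
Qed.

End matrix_analysis.

Section proximal_gradient_map.
Context {R : realType}.

Lemma grad_continuous n (f : 'rV[R]_n -> R) :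
  (forall i, continuous (partial i f)) -> continuous (grad f).
Proof.
move=> pc x; apply: (@cvg_mx_coord _ _ _ (nbhs_filter x)) => i j.
by rewrite mxE; under eq_cvg do rewrite mxE; exact: pc.
Qed.

Lemma prox_l1_affine_near {n} (t lam : R) (a : 'rV[R]_n) :
  0 <= t * lam -> (forall i, `|a 0 i| != t * lam) ->
  \forall z \near a, prox_l1 t lam z =
    prox_l1 t lam a +
    (z - a) *m diag_mx (\row_i soft_thr_slope (t * lam) (a 0 i)).
Proof.
move=> k0 ak.
have : \forall z \near a, forall i, soft_thr (t * lam) ((z : 'rV[R]_n) 0 i) =
    soft_thr (t * lam) (a 0 i) + (z 0 i - a 0 i) * soft_thr_slope (t * lam) (a 0 i).
  apply: (filter_forall (nbhs_filter a)) => i.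
  exact: (@coord_continuous _ _ _ 0 i a _ (soft_thr_affine_near _ _ k0 (ak i))).
apply: filterS => z hz; apply/rowP => i.
by rewrite mul_mx_diag !mxE hz.
Qed.

End proximal_gradient_map.

Theorem lemma3p4 (R : realType) (n : nat) (f : 'rV[R]_n -> R) (lam t : R)
  (xs : 'rV[R]_n) :
  C2 f -> 0 < lam -> 0 < t ->
  xs - prox_l1 t lam (xs - t *: grad f xs) = 0 ->
  (forall i : 'I_n, ~ (xs 0 i = 0 /\ `|grad f xs 0 i| = lam)) ->
  exists b : R, 0 < b /\
    exists J : 'M[R]_n,
      forall y, (exists2 x, cball_euclid xs b x & y = x - t *: grad f x) ->
        differentiable (prox_l1 t lam) y /\ 'J (prox_l1 t lam) y = J.
Proof.
move=> [_ [_ [pc _]]] lam0 t0 fix_xs compl.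
pose Y := (@id 'rV[R]_n) - t \*: grad f.
have k0 : 0 <= t * lam by rewrite mulr_ge0 // ltW.
have off_kinks i : `|Y xs 0 i| != t * lam.
  have := compl i; move/rowP: fix_xs => /(_ i); rewrite !mxE.
  by move=> /subr0_eq; exact: soft_thr_fixpoint_off_kink.
have Y_cont : Y @ xs --> Y xs.
  apply: cvgB; [exact: nbhs_filter | exact: cvg_id |].
  by apply: cvgZl_tmp; [exact: nbhs_filter | exact: grad_continuous].
have /nbhs_interior/Y_cont/nbhs_ballP [e e0 near_affine] :=
  prox_l1_affine_near t lam (Y xs) k0 off_kinks.
exists (e / 2); split; first by rewrite divr_gt0.
exists (diag_mx (\row_i soft_thr_slope (t * lam) (Y xs 0 i))) => _ [x xB ->].
apply: differentiable_near_affine (near_affine x _).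
by apply: cball_euclid_sub_ball xB; rewrite ?divr_ge0 ?ltW // ltr_pdivrMr // ltr_pMr // ltr1n.
Qed.
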